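(* Let $F$ be an algebraically closed field, $l>1$ an integer coprime to the characteristic of $F$, $\xi\in F$ a primitive $l$-th root of $1$, and $I$ an infinite ordered set. Let $$Clg(l,I)=\langle x_i,\ i\in I \mid x_i^l=1;\ x_i^{-1}x_jx_i=\xi x_j \text{ for } i<j;\ x_i^{-1}x_jx_i=\xi^{-1}x_j \text{ for } i>j;\ i,j\in I\rangle.$$ Then $Clg(l,I)$ is a unital locally matrix algebra with Steinitz number $\mathbf{n}(Clg(l,I))=l^{\infty}$.
   Context: A unital algebra $A$ is locally matrix if every finite subset lies in a subalgebra $B$ with $1_A\in B$ and $B\cong M_n(F)$ for some $n$. $D(A)$ is the set of $n$ for which $A$ has a subalgebra containing $1_A$ isomorphic to $M_n(F)$, and $\mathbf{n}(A)$ is the least common multiple of $D(A)$ in the lattice of Steinitz numbers $\prod_p p^{r_p}$ ($r_p\in\mathbb{N}\cup\{0,\infty\}$, ordered by divisibility). $l^\infty$ denotes the Steinitz number with exponent $\infty$ at each prime dividing $l$ and $0$ at all other primes. *)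

From HB Require Import structures.
From mathcomp Require Import all_boot all_order all_algebra.
Set Implicit Arguments. Unset Strict Implicit. Unset Printing Implicit Defensive.
Import Order.TTheory GRing.Theory Num.Theory.
Local Open Scope ring_scope.

Definition infinite_type (T : eqType) : Prop :=
  forall s : seq T, exists t : T, t \notin s.

Definition is_alg_hom (F : fieldType) (A B : algType F) (g : A -> B) : Prop :=
  [/\ forall a b, g (a + b) = g a + g b,
      forall (c : F) a, g (c *: a) = c *: g a,
      forall a b, g (a * b) = g a * g b &
      g 1 = 1].

(* The defining relations of Clg(l, I), with x_i^{-1} = x_i^(l-1). *)
Definition clg_rel (F : fieldType) (l : nat) (xi : F) (d : Order.disp_t)
  (I : orderType d) (B : algType F) (y : I -> B) : Prop :=
  [/\ forall i, y i ^+ l = 1,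
      forall i j, (i < j)%O -> y i ^+ l.-1 * y j * y i = xi *: y j &
      forall i j, (j < i)%O -> y i ^+ l.-1 * y j * y i = xi^-1 *: y j].

(* (A, x) is the algebra presented by generators x_i and the relations above:
   universal property of the presentation. *)
Definition is_Clg (F : fieldType) (l : nat) (xi : F) (d : Order.disp_t)
  (I : orderType d) (A : algType F) (x : I -> A) : Prop :=
  clg_rel l xi x /\
  forall (B : algType F) (y : I -> B), clg_rel l xi y ->
    (exists g : A -> B, is_alg_hom g /\ forall i, g (x i) = y i) /\
    (forall g1 g2 : A -> B, is_alg_hom g1 -> is_alg_hom g2 ->
       (forall i, g1 (x i) = y i) -> (forall i, g2 (x i) = y i) ->
       forall a, g1 a = g2 a).

(* f embeds M_(k+1)(F) unitally into A; its image is a subalgebra containing 1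
   isomorphic to M_(k+1)(F).  (Sizes are written k.+1 so that 'M_(k.+1) carries
   its canonical F-algebra structure; M_0 = 0 is excluded as in the paper.) *)
Definition matrix_embedding (F : fieldType) (A : algType F) (k : nat)
  (f : 'M[F]_k.+1 -> A) : Prop := is_alg_hom f /\ injective f.

Definition D_set (F : fieldType) (A : algType F) (n : nat) : Prop :=
  exists k : nat, n = k.+1 /\ exists f : 'M[F]_k.+1 -> A, matrix_embedding f.

Definition locally_matrix (F : fieldType) (A : algType F) : Prop :=
  forall s : seq A, exists k : nat,
    exists f : 'M[F]_k.+1 -> A, matrix_embedding f /\
      forall a, a \in s -> exists m, f m = a.

(* Steinitz numbers: prime p |-> exponent r_p, None = infinity.
   (Values at non-primes are irrelevant.) *)
Definition steinitz := nat -> option nat.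

Definition le_exp (a b : option nat) : Prop :=
  match a, b with
  | _, None => True
  | None, Some _ => False
  | Some m, Some n => (m <= n)%N
  end.

Definition steinitz_dvd (s t : steinitz) : Prop :=
  forall p, prime p -> le_exp (s p) (t p).

Definition steinitz_of_nat (n : nat) : steinitz := fun p => Some (logn p n).

Definition steinitz_inf (l : nat) : steinitz :=
  fun p => if (p %| l)%N then None else Some 0%N.

Definition is_steinitz_lcm (S : nat -> Prop) (s : steinitz) : Prop :=
  (forall n, S n -> steinitz_dvd (steinitz_of_nat n) s) /\
  (forall t, (forall n, S n -> steinitz_dvd (steinitz_of_nat n) t) ->
     steinitz_dvd s t).

From HB Require Import structures.
From mathcomp Require Import all_boot all_order all_algebra.
From mathcomp Require Import zify.
From Stdlib Require Import ClassicalEpsilon.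
Import Order.TTheory GRing.Theory Num.Theory.
Local Open Scope ring_scope.
Set Implicit Arguments. Unset Strict Implicit. Unset Printing Implicit Defensive.

(* If u^l = v^l = 1 and v u = xi u v, then P = l^-1 (1 + v + ... + v^(l-1)) is
   an idempotent and the u^a P u^(l-b) form l x l matrix units generating the
   same subalgebra as u and v.  For generators z_0 < ... < z_(2m-1) of Clg(l,I),
   multiplying each z_k, k >= 2, by a normalised w = c u v^(l-1) makes it commute
   with u = z_0 and v = z_1 without changing the relations among them, so by
   induction z_0, ..., z_(2m-1) generate a unital copy of M_(l^m)(F).  Every element
   lies in the subalgebra generated by finitely many x_i, and I is infinite, so A
   is locally matrix with every l^m in D(A).  Conversely, a unital M_n(F) inside
   a unital M_N(F) gives n x n matrix units in M_N(F), and comparing ranks of the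
   diagonal units shows n | N; hence D(A) consists of divisors of powers of l.
*)

Section Generated.
Variables (F : fieldType) (A : algType F).
Implicit Types (X Y : A -> Prop) (a b c : A).

Inductive gen X : A -> Prop :=
| gen_base a : X a -> gen X a
| gen1 : gen X 1
| genD a b : gen X a -> gen X b -> gen X (a + b)
| genZ k a : gen X a -> gen X (k *: a)
| genM a b : gen X a -> gen X b -> gen X (a * b).

Lemma gen0 X : gen X 0.
Proof. by rewrite -(scale0r 1); apply/genZ/gen1. Qed.

Lemma gen_sum X (J : Type) (r : seq J) (P : pred J) (G : J -> A) :
  (forall j, P j -> gen X (G j)) -> gen X (\sum_(j <- r | P j) G j).
Proof. exact: (big_ind _ (gen0 X) (@genD X)). Qed.

Lemma genX X a n : gen X a -> gen X (a ^+ n).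
Proof.
by move=> Xa; elim: n => [|n IHn]; [rewrite expr0; apply: gen1 | rewrite exprS; apply: genM].
Qed.

Lemma gen_trans X Y a : (forall b, X b -> gen Y b) -> gen X a -> gen Y a.
Proof.
move=> XY; elim=> {a} [a /XY //| | a b _ ? _ ? | k a _ ? | a b _ ? _ ?].
- exact: gen1.
- exact: genD.
- exact: genZ.
- exact: genM.
Qed.

Lemma gen_comm X c a : (forall b, X b -> GRing.comm c b) -> gen X a -> GRing.comm c a.
Proof.
move=> Xc; elim=> {a} [a /Xc //| | a b _ ? _ ? | k a _ ca | a b _ ? _ ?].
- exact: commr1.
- exact: commrD.
- by rewrite /GRing.comm -scalerAr ca scalerAl.
- exact: commrM.
Qed.

End Generated.

Definition fam_range (J : Type) (A : Type) (x : J -> A) (P : pred J) : A -> Prop :=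
  fun y => exists2 j, P j & y = x j.

Lemma gen_fam_range_sub (F : fieldType) (A : algType F) (J : Type) (x : J -> A)
    (P Q : pred J) a :
  subpred P Q -> gen (fam_range x P) a -> gen (fam_range x Q) a.
Proof. by move=> PQ; apply: gen_trans => _ [j /PQ Qj ->]; apply: gen_base; exists j. Qed.

Lemma alg_hom0 (F : fieldType) (A B : algType F) (f : A -> B) : is_alg_hom f -> f 0 = 0.
Proof. by case=> fD _ _ _; apply: (addrI (f 0)); rewrite -fD !addr0. Qed.

Lemma alg_hom_sum (F : fieldType) (A B : algType F) (f : A -> B) (J : Type) (r : seq J)
    (P : pred J) (G : J -> A) :
  is_alg_hom f -> f (\sum_(j <- r | P j) G j) = \sum_(j <- r | P j) f (G j).
Proof. by move=> hf; apply: (big_morph f _ (alg_hom0 hf)); case: hf. Qed.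

Lemma gen_alg_hom_image (F : fieldType) (A B : algType F) (f : B -> A) (X : A -> Prop) a :
  is_alg_hom f -> (forall b, X b -> exists m, f m = b) -> gen X a -> exists m, f m = a.
Proof.
case=> fD fZ fM f1 Xf; elim=> {a} [a /Xf //| | a b _ [m <-] _ [n <-] | k a _ [m <-] |
  a b _ [m <-] _ [n <-]].
- by exists 1.
- by exists (m + n).
- by exists (k *: m).
- by exists (m * n).
Qed.

Section QuasiCommutation.
Variables (F : fieldType) (A : algType F).
Implicit Types (a b c : A) (q r : F).

Definition qcomm q a b := b * a = q *: (a * b).

Lemma qcomm_comm a b : qcomm 1 a b <-> GRing.comm b a.
Proof. by rewrite /qcomm scale1r. Qed.

Lemma qcommZl q k a b : qcomm q a b -> qcomm q (k *: a) b.
Proof. by rewrite /qcomm => ab; rewrite -scalerAr ab -scalerAl !scalerA mulrC. Qed.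

Lemma qcommZr q k a b : qcomm q a b -> qcomm q a (k *: b).
Proof. by rewrite /qcomm => ab; rewrite -scalerAl ab -scalerAr !scalerA mulrC. Qed.

Lemma qcommMl q r a b c : qcomm q a b -> qcomm r c b -> qcomm (q * r) (a * c) b.
Proof.
rewrite /qcomm => ab cb; rewrite mulrA ab -scalerAl -[a * b * c]mulrA cb.
by rewrite -scalerAr scalerA mulrA.
Qed.

Lemma qcommMr q r a b c : qcomm q a b -> qcomm r a c -> qcomm (q * r) a (b * c).
Proof.
rewrite /qcomm => ab ac; rewrite -mulrA ac -scalerAr [b * (a * c)]mulrA ab -scalerAl.
by rewrite scalerA mulrC -mulrA.
Qed.

Lemma qcomm_refl a : qcomm 1 a a.
Proof. by rewrite /qcomm scale1r. Qed.

Lemma qcomm1l b : qcomm 1 1 b.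
Proof. by rewrite /qcomm scale1r mulr1 mul1r. Qed.

Lemma qcomm1r a : qcomm 1 a 1.
Proof. by rewrite /qcomm scale1r mulr1 mul1r. Qed.

Lemma qcommXl q a b n : qcomm q a b -> qcomm (q ^+ n) (a ^+ n) b.
Proof.
move=> ab; elim: n => [|n IHn]; first by rewrite !expr0; apply: qcomm1l.
by rewrite !exprSr; apply: qcommMl.
Qed.

Lemma qcommXr q a b n : qcomm q a b -> qcomm (q ^+ n) a (b ^+ n).
Proof.
move=> ab; elim: n => [|n IHn]; first by rewrite !expr0; apply: qcomm1r.
by rewrite !exprSr; apply: qcommMr.
Qed.

Lemma qcommV q r a b : r * q = 1 -> qcomm q a b -> qcomm r b a.
Proof. by rewrite /qcomm => rq ab; rewrite ab scalerA rq scale1r. Qed.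

Lemma exprM_qcomm q a b n : qcomm q a b -> (a * b) ^+ n = q ^+ 'C(n, 2) *: (a ^+ n * b ^+ n).
Proof.
move=> ab; elim: n => [|n IHn]; first by rewrite !expr0 scale1r mulr1.
rewrite exprSr IHn -scalerAl -mulrA (mulrA (b ^+ n)) (qcommXr n ab) -scalerAl.
by rewrite -scalerAr scalerA -mulrA -exprSr mulrA -exprSr binS bin1 exprD.
Qed.

End QuasiCommutation.

Section MatrixUnits.
Variables (F : fieldType) (A : algType F).

Definition mxunits (T : finType) (E : T -> T -> A) :=
  (forall a b c d, E a b * E c d = if b == c then E a d else 0) /\ \sum_t E t t = 1.

Definition units_range (T : finType) (E : T -> T -> A) : A -> Prop :=
  fun y => exists a b, y = E a b.

Lemma mxunits_neq0 (T : finType) (E : T -> T -> A) a b : mxunits E -> E a b != 0.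
Proof.
case=> EM E1; apply: contraTneq (oner_neq0 A) => Eab0.
have Ec0 c : E c c = 0.
  have -> : E c c = E c a * E a b * E b c by rewrite EM eqxx /= EM eqxx.
  by rewrite Eab0 mulr0 mul0r.
by rewrite negbK -E1 big1.
Qed.

Lemma mxunits_card_gt0 (T : finType) (E : T -> T -> A) : mxunits E -> (0 < #|T|)%N.
Proof.
move=> E_units; rewrite lt0n; apply: contraTneq (oner_neq0 A) => /card0_eq T0.
by rewrite negbK -E_units.2 big_pred0.
Qed.

Lemma mxunits_reindex (T U : finType) (h : U -> T) (E : T -> T -> A) :
  bijective h -> mxunits E -> mxunits (fun i j => E (h i) (h j)).
Proof.
move=> h_bij [EM E1]; split=> [a b c d|]; first by rewrite EM (bij_eq h_bij).
by rewrite -E1 (reindex h (onW_bij _ h_bij)).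
Qed.

Section Embedding.
Variables (k : nat) (E : 'I_k.+1 -> 'I_k.+1 -> A).
Hypothesis E_units : mxunits E.

Definition mxunits_map (M : 'M[F]_k.+1) : A := \sum_i \sum_j M i j *: E i j.

Lemma mxunits_map_delta a b : mxunits_map (delta_mx a b) = E a b.
Proof.
rewrite /mxunits_map (bigD1 a) //= (bigD1 b) //= mxE !eqxx scale1r.
rewrite big1 => [|j /negPf bj]; last by rewrite mxE bj andbF scale0r.
rewrite addr0 big1 ?addr0 // => i /negPf ai.
by rewrite big1 // => j _; rewrite mxE ai scale0r.
Qed.

Lemma mxunits_mapM_unit M c b : mxunits_map M * E c b = \sum_i M i c *: E i b.
Proof.
rewrite /mxunits_map mulr_suml; apply: eq_bigr => i _; rewrite mulr_suml (bigD1 c) //=.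
rewrite big1 => [|j /negPf jc]; last by rewrite -scalerAl E_units.1 jc scaler0.
by rewrite addr0 -scalerAl E_units.1 eqxx.
Qed.

Lemma mxunits_mapM M N : mxunits_map (M * N) = mxunits_map M * mxunits_map N.
Proof.
transitivity (\sum_c \sum_j N c j *: (mxunits_map M * E c j)); last first.
  rewrite [mxunits_map N]/mxunits_map mulr_sumr; apply: eq_bigr => c _.
  by rewrite mulr_sumr; apply: eq_bigr => j _; rewrite scalerAr.
rewrite {1}/mxunits_map.
under eq_bigr => i _ do under eq_bigr => j _ do rewrite -mulmxE mxE scaler_suml.
under [RHS]eq_bigr do under eq_bigr do rewrite mxunits_mapM_unit scaler_sumr.
rewrite exchange_big; under eq_bigr do rewrite exchange_big; rewrite exchange_big /=.
by do 3!(apply: eq_bigr => ? _); rewrite scalerA mulrC.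
Qed.

Lemma mxunits_map_inj : injective mxunits_map.
Proof.
have coef M a b : E a a * mxunits_map M * E b b = M a b *: E a b.
  rewrite -mulrA mxunits_mapM_unit mulr_sumr (bigD1 a) //= big1 => [|i /negPf ia].
    by rewrite addr0 -scalerAr E_units.1 eqxx.
  by rewrite -scalerAr E_units.1 eq_sym ia scaler0.
move=> M N MN; apply/matrixP => a b; apply/eqP; rewrite -subr_eq0.
have : (M a b - N a b) *: E a b == 0 by rewrite scalerBl -!coef MN subrr.
by rewrite scaler_eq0 (negPf (mxunits_neq0 a b E_units)) orbF.
Qed.

Lemma mxunits_map_embedding : matrix_embedding mxunits_map.
Proof.
split; last exact: mxunits_map_inj.
split=> [M N | c M | M N |].
- rewrite -big_split; apply: eq_bigr => i _; rewrite -big_split.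
  by apply: eq_bigr => j _; rewrite mxE scalerDl.
- rewrite scaler_sumr; apply: eq_bigr => i _; rewrite scaler_sumr.
  by apply: eq_bigr => j _; rewrite mxE scalerA.
- exact: mxunits_mapM.
- rewrite -E_units.2; apply: eq_bigr => i _; rewrite (bigD1 i) //= big1 => [|j ji].
    by rewrite mxE eqxx scale1r addr0.
  by rewrite mxE eq_sym (negPf ji) scale0r.
Qed.

End Embedding.

Lemma mxunits_embedding (T : finType) (E : T -> T -> A) : mxunits E ->
  exists k, #|T| = k.+1 /\ exists f : 'M[F]_k.+1 -> A,
    matrix_embedding f /\ forall a b, exists M, f M = E a b.
Proof.
move=> E_units; exists #|T|.-1; have cardT := prednK (mxunits_card_gt0 E_units).
split=> //.
pose h (i : 'I_#|T|.-1.+1) := enum_val (cast_ord cardT i).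
pose h' t := cast_ord (esym cardT) (enum_rank t).
have hK : cancel h' h by move=> t; rewrite /h /h' cast_ordKV enum_rankK.
have h_bij : bijective h by exists h' => // i; rewrite /h /h' enum_valK cast_ordK.
have E'_units := mxunits_reindex h_bij E_units.
exists (mxunits_map (fun i j => E (h i) (h j))); split; first exact: mxunits_map_embedding.
by move=> a b; exists (delta_mx (h' a) (h' b)); rewrite mxunits_map_delta !hK.
Qed.

Section Product.
Variables (T U : finType) (E : T -> T -> A) (E' : U -> U -> A).
Hypotheses (E_units : mxunits E) (E'_units : mxunits E').
Hypothesis EE' : forall a b a' b', GRing.comm (E a b) (E' a' b').

Definition mxunits_prod (p q : T * U) : A := E p.1 q.1 * E' p.2 q.2.

Lemma prod_mxunits : mxunits mxunits_prod.
Proof.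
split=> [[a a'] [b b'] [c c'] [d d'] | ]; rewrite /mxunits_prod /=.
  rewrite mulrA -[E a b * _ * _]mulrA -EE' mulrA -mulrA E_units.1 E'_units.1 xpair_eqE.
  by case: (b == c); case: (b' == c'); rewrite ?mul0r ?mulr0.
rewrite -(pair_big xpredT xpredT (fun a a' => E a a * E' a' a')) /= -E_units.2.
by apply: eq_bigr => a _; rewrite -mulr_sumr E'_units.2 mulr1.
Qed.

Lemma gen_mxunits_prodl a b : gen (units_range mxunits_prod) (E a b).
Proof.
rewrite -[E a b]mulr1 -E'_units.2 mulr_sumr; apply: gen_sum => t _.
by apply: gen_base; exists (a, t), (b, t).
Qed.

Lemma gen_mxunits_prodr a' b' : gen (units_range mxunits_prod) (E' a' b').
Proof.
rewrite -[E' a' b']mul1r -E_units.2 mulr_suml; apply: gen_sum => t _.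
by apply: gen_base; exists (t, a'), (t, b').
Qed.

End Product.

End MatrixUnits.

Lemma mxunits_inj_alg_hom (F : fieldType) (A B : algType F) (f : B -> A)
    (T : finType) (Q : T -> T -> B) :
  is_alg_hom f -> injective f -> mxunits (fun a b => f (Q a b)) <-> mxunits Q.
Proof.
move=> hf f_inj; have [_ _ fM f1] := hf.
have f_if (bb : bool) a d : f (if bb then Q a d else 0) = if bb then f (Q a d) else 0.
  by case: bb; rewrite ?alg_hom0.
split=> -[QM Q1]; split.
- by move=> a b c d; apply: f_inj; rewrite fM QM f_if.
- by apply: f_inj; rewrite alg_hom_sum // Q1 f1.
- by move=> a b c d; rewrite -fM QM f_if.
- by rewrite -alg_hom_sum // Q1.
Qed.

Lemma delta_mxunits (F : fieldType) n : mxunits (@delta_mx F n.+1 n.+1).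
Proof.
split=> [a b c d|]; first by rewrite -mulmxE mul_delta_mx_cond; case: (b == c).
apply/matrixP => i j; rewrite summxE !mxE (bigD1 i) //= big1 => [|a ai].
  by rewrite mxE eqxx addr0 eq_sym.
by rewrite mxE eq_sym (negPf ai).
Qed.

Lemma mxrank_orth_idemD (F : fieldType) n (P R : 'M[F]_n) :
  P *m P = P -> R *m R = R -> P *m R = 0 -> R *m P = 0 ->
  \rank (P + R)%R = (\rank P + \rank R)%N.
Proof.
move=> PP RR PR RP; apply/eqP; rewrite eqn_leq mxrank_add /=.
have PRD : col_mx P R = col_mx P R *m (P + R).
  by rewrite mul_col_mx !mulmxDr PP RR PR RP addr0 add0r.
rewrite -rank_diag_block_mx.
have -> : block_mx P 0 0 R = col_mx P R *m row_mx P R by rewrite mul_col_row PP RR PR RP.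
apply: leq_trans (mxrankM_maxl _ _) _.
by rewrite PRD; apply: mxrankM_maxr.
Qed.

Lemma mxunits_card_dvd (F : fieldType) n (T : finType) (Q : T -> T -> 'M[F]_n.+1) :
  mxunits Q -> (#|T| %| n.+1)%N.
Proof.
move=> Q_units; have [QM Q1] := Q_units; rewrite -mulmxE in QM.
have [t0 _] := card_gt0P (mxunits_card_gt0 Q_units).
have rankQ a : \rank (Q a a) = \rank (Q t0 t0).
  have le_rank b c : (\rank (Q b b) <= \rank (Q c c))%N.
    have -> : Q b b = Q b c *m Q c c *m Q c b by rewrite QM eqxx /= QM eqxx.
    by apply: leq_trans (mxrankM_maxl _ _) _; apply: mxrankM_maxr.
  by apply/eqP; rewrite eqn_leq !le_rank.
have sumQ (P : seq T) c :
    (\sum_(a in P) Q a a) *m Q c c = (if c \in P then Q c c else 0) /\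
    Q c c *m (\sum_(a in P) Q a a) = (if c \in P then Q c c else 0).
  rewrite mulmx_suml mulmx_sumr; case: ifP => Pc; last first.
    by split; apply: big1 => a Pa; rewrite QM; case: eqP => // ?; subst; rewrite Pa in Pc.
  rewrite (bigD1 c Pc) [in X in _ /\ X](bigD1 c Pc) /= !QM eqxx.
  by split; rewrite big1 ?addr0 // => a /andP[_ /negPf ac]; rewrite QM ?ac // eq_sym ac.
have rank_sum s : uniq s -> \rank (\sum_(a in s) Q a a)%R = (size s * \rank (Q t0 t0))%N.
  elim: s => [_|t s IHs] /=; first by rewrite big_pred0 ?mxrank0.
  case/andP=> t_s s_uniq; rewrite -big_uniq /= ?t_s // big_cons big_uniq //.
  have [St tS] := sumQ s t; rewrite (negPf t_s) in St tS.
  rewrite mxrank_orth_idemD ?IHs ?rankQ ?QM ?eqxx // mulmx_sumr.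
  by apply: eq_bigr => b sb; have [-> _] := sumQ s b; rewrite sb.
have := rank_sum _ (enum_uniq T); rewrite -cardE (eq_bigl xpredT) => [|a]; last first.
  by rewrite mem_enum.
by rewrite Q1 mxrank1 => ->; apply: dvdn_mulr.
Qed.

Lemma sum_exprS_root (R : pzRingType) (x : R) n : x ^+ n = 1 ->
  \sum_(k < n) x ^+ k.+1 = \sum_(k < n) x ^+ k.
Proof.
move=> xn; have := @big_ord_recl R 0 +%R n (fun k : 'I_n.+1 => x ^+ k).
by rewrite big_ord_recr /= xn expr0 addrC => /addrI <-.
Qed.

Lemma sum_expr_root (F : fieldType) (z : F) n : z ^+ n = 1 ->
  \sum_(k < n) z ^+ k = if z == 1 then n%:R else 0.
Proof.
move=> zn; case: eqP => [-> | /eqP z_neq1].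
  by rewrite (eq_bigr (fun _ => 1)) ?sumr_const ?card_ord // => k _; rewrite expr1n.
have : (z - 1) * \sum_(k < n) z ^+ k = 0.
  rewrite mulrBl mulr_sumr mul1r; under eq_bigr do rewrite -exprS.
  by rewrite sum_exprS_root ?subrr.
by move/eqP; rewrite mulf_eq0 subr_eq0 (negPf z_neq1) => /eqP.
Qed.

Section WeylPair.
Variables (F : fieldType) (A : algType F) (l : nat) (xi : F) (u v : A).
Hypothesis xi_prim : l.-primitive_root xi.
Hypotheses (u_l : u ^+ l = 1) (v_l : v ^+ l = 1) (uv : qcomm xi u v).

Let l_gt0 : (0 < l)%N := prim_order_gt0 xi_prim.
Let l_neq0 : l%:R != 0 :> F := prim_root_natf_neq0 xi_prim.

Let xi_exp_root k : (xi ^+ k) ^+ l = 1.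
Proof. by rewrite -exprM mulnC exprM (prim_expr_order xi_prim) expr1n. Qed.

Definition weyl_proj : A := (l%:R)^-1 *: \sum_(k < l) v ^+ k.

Definition weyl_units (a b : 'I_l) : A := u ^+ a * weyl_proj * u ^+ (l - b).

Lemma mul_weyl_proj : v * weyl_proj = weyl_proj.
Proof.
rewrite /weyl_proj -scalerAr mulr_sumr; under eq_bigr do rewrite -exprS.
by rewrite sum_exprS_root.
Qed.

Lemma mulX_weyl_proj k : v ^+ k * weyl_proj = weyl_proj.
Proof. by elim: k => [|k IHk]; rewrite ?mul1r // exprSr -mulrA mul_weyl_proj. Qed.

Lemma weyl_projXP j :
  weyl_proj * u ^+ j * weyl_proj = if (l %| j)%N then weyl_proj else 0.
Proof.
have -> : weyl_proj * u ^+ j * weyl_proj =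
    ((l%:R)^-1 * \sum_(k < l) (xi ^+ j) ^+ k) *: (u ^+ j * weyl_proj).
  rewrite {1}/weyl_proj -!scalerAl !mulr_suml -scalerA scaler_suml.
  congr (_ *: _); apply: eq_bigr => k _.
  by rewrite (qcommXr k (qcommXl j uv)) -scalerAl -mulrA mulX_weyl_proj.
rewrite sum_expr_root // -(prim_order_dvd xi_prim); case: ifP => [l_j | _].
  by rewrite mulVf // scale1r (expr_dvd u_l l_j) mul1r.
by rewrite mulr0 scale0r.
Qed.

Lemma weyl_unitsM a b c d :
  weyl_units a b * weyl_units c d = if b == c then weyl_units a d else 0.
Proof.
have -> : weyl_units a b * weyl_units c d =
    u ^+ a * (weyl_proj * u ^+ (l - b + c) * weyl_proj) * u ^+ (l - d).
  by rewrite /weyl_units exprD !mulrA.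
rewrite weyl_projXP; have -> : (l %| l - b + c)%N = (b == c).
  rewrite -val_eqE /=; case: eqP => [<- | bc]; first by rewrite subnK ?dvdnn // ltnW.
  have bl := ltn_ord b; have cl := ltn_ord c; apply/negP => /dvdnP[[|[|q]] lbc]; lia.
by case: (b == c); rewrite ?mulr0 ?mul0r.
Qed.

Lemma weyl_units_sum : \sum_a weyl_units a a = 1.
Proof.
have units_diag a : weyl_units a a =
    (l%:R)^-1 *: \sum_(k < l) (xi ^+ k) ^+ (l - a) *: v ^+ k.
  rewrite /weyl_units /weyl_proj -scalerAr -scalerAl; congr (_ *: _).
  rewrite mulr_sumr mulr_suml; apply: eq_bigr => k _.
  rewrite -mulrA (qcommXl (l - a) (qcommXr k uv)) -scalerAr mulrA -exprD.
  by rewrite subnKC ?u_l ?mul1r // ltnW.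
have sum_rev k : \sum_(a < l) (xi ^+ k) ^+ (l - a) = \sum_(a < l) (xi ^+ k) ^+ a.
  rewrite (reindex_inj rev_ord_inj) /=; under eq_bigr do rewrite subKn //.
  exact: sum_exprS_root.
have xi_k1 (k : 'I_l) : (xi ^+ k == 1) = (k == Ordinal l_gt0).
  rewrite -(prim_order_dvd xi_prim) -val_eqE /=; case: (posnP k) => [-> | k_gt0].
    by rewrite dvdn0.
  by rewrite gtnNdvd // gtn_eqF.
under eq_bigr do rewrite units_diag.
rewrite -scaler_sumr exchange_big /=; under eq_bigr do rewrite -scaler_suml sum_rev.
under eq_bigr do rewrite sum_expr_root // xi_k1.
rewrite (bigD1 (Ordinal l_gt0)) //= big1 => [|k /negPf ->]; last by rewrite scale0r.
by rewrite addr0 expr0 scalerA mulVf // scale1r.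
Qed.

Lemma weyl_mxunits : mxunits weyl_units.
Proof. by split; [exact: weyl_unitsM | exact: weyl_units_sum]. Qed.

Lemma gen_weyl_u : gen (units_range weyl_units) u.
Proof.
rewrite -[u]mulr1 -weyl_units_sum mulr_sumr; apply: gen_sum => a _; apply: gen_base.
by exists (ordS a), a; rewrite /weyl_units !mulrA -exprS -[u ^+ a.+1](expr_mod _ u_l).
Qed.

Lemma gen_weyl_v : gen (units_range weyl_units) v.
Proof.
rewrite -[v]mulr1 -weyl_units_sum mulr_sumr; apply: gen_sum => a _.
have -> : v * weyl_units a a = xi ^+ a *: weyl_units a a.
  by rewrite /weyl_units !mulrA (qcommXl a uv) -!scalerAl -(mulrA _ v) mul_weyl_proj.
by apply/genZ/gen_base; exists a, a.
Qed.

Lemma weyl_units_gen X a b : X u -> X v -> gen X (weyl_units a b).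
Proof.
move=> Xu Xv; rewrite /weyl_units /weyl_proj; apply: genM; last exact/genX/gen_base.
by apply/genM/genZ/gen_sum => [|k _]; apply/genX/gen_base.
Qed.

End WeylPair.

Section QuasiCommutingSequences.
Variables (F : closedFieldType) (A : algType F) (l : nat) (xi : F).
Hypothesis xi_prim : l.-primitive_root xi.

Let l_gt0 : (0 < l)%N := prim_order_gt0 xi_prim.

Let xi_inv : xi ^+ l.-1 * xi = 1.
Proof. by rewrite -exprSr prednK // (prim_expr_order xi_prim). Qed.

Definition qseq (z : nat -> A) n :=
  (forall k, (k < n)%N -> z k ^+ l = 1) /\
  (forall p q, (p < q < n)%N -> qcomm xi (z p) (z q)).

Lemma weyl_twist (u v : A) : u ^+ l = 1 -> v ^+ l = 1 -> qcomm xi u v ->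
  exists c : F, (c *: (u * v ^+ l.-1)) ^+ l = 1.
Proof.
move=> u_l v_l uv; set g := (xi ^+ l.-1) ^+ 'C(l, 2).
have wl : (u * v ^+ l.-1) ^+ l = g%:A.
  have vl1 : (v ^+ l.-1) ^+ l = 1 by rewrite -exprM mulnC exprM v_l expr1n.
  by rewrite (exprM_qcomm l (qcommXr l.-1 uv)) u_l vl1 mulr1.
have g_neq0 : g != 0.
  by rewrite !expf_neq0 // (prim_root_eq0 xi_prim) -lt0n.
have /closed_rootP[c] : size ('X^l - (g^-1)%:P : {poly F}) != 1%N.
  by rewrite size_XnsubC // eqSS -lt0n.
rewrite rootE !hornerE subr_eq0 => /eqP cl.
by exists c; rewrite exprZn wl scalerA cl mulVf // scale1r.
Qed.

Lemma qseq_drop2 z n : qseq z n.+2 ->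
  exists w, [/\ gen (fam_range z (gtn 2%N)) w, w ^+ l = 1,
    qseq (fun k => w * z k.+2) n &
    forall j k, (j < 2)%N -> (k < n)%N -> GRing.comm (z j) (w * z k.+2)].
Proof.
case=> zl zq; have uv : qcomm xi (z 0%N) (z 1%N) by apply: zq.
have [c wl] := weyl_twist (zl 0%N isT) (zl 1%N isT) uv.
set w := c *: (z 0%N * z 1%N ^+ l.-1) in wl *; exists w.
have w_z k : (1 < k < n.+2)%N -> qcomm 1 w (z k).
  move=> k_gt1; rewrite -xi_inv mulrC; apply/qcommZl/qcommMl; first by apply: zq; lia.
  by apply/qcommXl/zq; lia.
have z_w j : (j < 2)%N -> qcomm (xi ^+ l.-1) (z j) w.
  case: j => [|[|//]] _; apply: qcommZr.
    by rewrite -[_ ^+ _]mul1r; apply/qcommMr/qcommXr/uv; apply: qcomm_refl.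
  by rewrite -[_ ^+ _]mulr1 -(expr1n F l.-1); apply/qcommMr/qcommXr/qcomm_refl/(qcommV xi_inv).
split=> [|//| |j k j_lt2 k_lt_n].
- by apply/genZ/genM; [|apply: genX]; apply: gen_base; [exists 0%N | exists 1%N].
- split=> [k k_lt_n | p q pq].
    by rewrite exprMn_comm ?wl ?zl ?mulr1 //; apply/commr_sym/qcomm_comm/w_z; lia.
  have zp_w : qcomm 1 (z p.+2) w by apply: (qcommV (mulr1 1)); apply: w_z; lia.
  have w_zq : qcomm 1 w (z q.+2) by apply: w_z; lia.
  have zpq : qcomm xi (z p.+2) (z q.+2) by apply: zq; lia.
  by have := qcommMr (qcommMl (qcomm_refl w) zp_w) (qcommMl w_zq zpq); rewrite !mul1r.
- apply/commr_sym/qcomm_comm; rewrite -xi_inv; apply: qcommMr (z_w j j_lt2) _.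
  by apply: zq; lia.
Qed.

Lemma qseq_mxunits m z : qseq z (2 * m) ->
  exists (T : finType) (E : T -> T -> A), [/\ #|T| = (l ^ m)%N, mxunits E,
    forall k, (k < 2 * m)%N -> gen (units_range E) (z k) &
    forall a b, gen (fam_range z (gtn (2 * m)%N)) (E a b)].
Proof.
elim: m z => [|m IHm] z; rewrite ?muln0 => zq.
  exists unit, (fun _ _ => 1); split=> //; last by move=> _ _; apply: gen1.
    by rewrite card_unit expn0.
  by split=> [[] [] [] []|]; rewrite ?mulr1 // sumr_const card_unit.
rewrite mulnS in zq *; have [w [w_gen wl z'q z_z']] := qseq_drop2 zq.
set z' := fun k => w * z k.+2 in z'q z_z'.
have [T' [E' [cardT' E'_units z'_E' E'_z']]] := IHm _ z'q.
have [zl zq2] := zq; have u_l := zl 0%N isT; have v_l := zl 1%N isT.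
have uv := zq2 0%N 1%N isT; set E0 := @weyl_units _ _ l (z 0%N) (z 1%N).
have E0_units : mxunits E0 := weyl_mxunits xi_prim u_l v_l uv.
have z01_E0 a b : gen (fam_range z (gtn 2%N)) (E0 a b).
  by apply: weyl_units_gen; [exists 0%N | exists 1%N].
have E0E' a b a' b' : GRing.comm (E0 a b) (E' a' b').
  apply: gen_comm (E'_z' a' b') => _ [k k_lt ->]; apply/commr_sym.
  by apply: gen_comm (z01_E0 a b) => _ [j j_lt ->]; apply/commr_sym/z_z'.
set Y := units_range (mxunits_prod E0 E').
have E0_Y a b : gen Y (E0 a b) := gen_mxunits_prodl E0 E'_units a b.
have E'_Y a b : gen Y (E' a b) := gen_mxunits_prodr E' E0_units a b.
have z01_Y j : (j < 2)%N -> gen Y (z j).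
  case: j => [|[|//]] _; [apply: gen_trans (gen_weyl_u xi_prim u_l uv) |
    apply: gen_trans (gen_weyl_v xi_prim u_l v_l uv)]; by move=> _ [a [b ->]].
have w_Y : gen Y w by apply: gen_trans w_gen => _ [j /z01_Y ? ->].
exists ('I_l * T')%type, (mxunits_prod E0 E'); split.
- by rewrite card_prod card_ord cardT' expnS.
- exact: prod_mxunits.
- case=> [|[|k]] k_lt; try exact: z01_Y.
  have -> : z k.+2 = w ^+ l.-1 * z' k by rewrite /z' mulrA -exprSr prednK // wl mul1r.
  by apply: genM (genX _ w_Y) (gen_trans _ (z'_E' k k_lt)) => _ [a [b ->]].
- move=> [a a'] [b b'] /=; apply: genM.
    by apply: gen_fam_range_sub (z01_E0 a b) => j /= /leq_trans; apply.
  apply: gen_trans (E'_z' a' b') => _ [k k_lt ->]; apply: genM.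
    by apply: gen_fam_range_sub w_gen => j /= /leq_trans; apply.
  by apply: gen_base; exists k.+2.
Qed.

End QuasiCommutingSequences.

Section FinitelyGenerated.
Variables (F : fieldType) (A : algType F) (I : eqType) (x : I -> A).

Definition fin_gen a := exists s : seq I, gen (fam_range x (mem s)) a.

Lemma fin_gen2 a b : fin_gen a -> fin_gen b ->
  exists s : seq I, gen (fam_range x (mem s)) a /\ gen (fam_range x (mem s)) b.
Proof.
move=> [s1 a_s1] [s2 b_s2]; exists (s1 ++ s2).
by split; [apply: gen_fam_range_sub a_s1 | apply: gen_fam_range_sub b_s2] => i /=;
  rewrite mem_cat => ->; rewrite ?orbT.
Qed.

Definition fin_genb : {pred A} :=
  fun a => if excluded_middle_informative (fin_gen a) then true else false.

Lemma fin_genP a : reflect (fin_gen a) (a \in fin_genb).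
Proof. by rewrite unfold_in /fin_genb; case: excluded_middle_informative; constructor. Qed.

Lemma fin_genb_subalg_closed : subalg_closed fin_genb.
Proof.
split=> [|k a b /fin_genP a_fg /fin_genP b_fg | a b /fin_genP a_fg /fin_genP b_fg];
  apply/fin_genP; first by exists [::]; apply: gen1.
- by have [s [? ?]] := fin_gen2 a_fg b_fg; exists s; apply: genD => //; apply: genZ.
- by have [s [? ?]] := fin_gen2 a_fg b_fg; exists s; apply: genM.
Qed.

HB.instance Definition _ := GRing.isSubalgClosed.Build F A fin_genb fin_genb_subalg_closed.

Inductive fin_gen_subalg := FinGenSubalg a of a \in fin_genb.
Definition fin_gen_val u := let: FinGenSubalg a _ := u in a.
HB.instance Definition _ := [isSub for fin_gen_val].
HB.instance Definition _ := [Choice of fin_gen_subalg by <:].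
HB.instance Definition _ := [SubChoice_isSubAlgebra of fin_gen_subalg by <:].

Lemma fin_gen_gen i : x i \in fin_genb.
Proof. by apply/fin_genP; exists [:: i]; apply: gen_base; exists i; first exact: mem_head. Qed.

End FinitelyGenerated.

Lemma is_alg_hom_comp (F : fieldType) (A B C : algType F) (f : B -> C) (g : A -> B) :
  is_alg_hom f -> is_alg_hom g -> is_alg_hom (f \o g).
Proof. by move=> [fD fZ fM f1] [gD gZ gM g1]; split=> /= *; rewrite ?gD ?gZ ?gM ?g1. Qed.

Lemma clg_fin_gen (F : fieldType) l (xi : F) d (I : orderType d) (A : algType F)
    (x : I -> A) :
  is_Clg l xi x -> forall a, fin_gen x a.
Proof.
(* The universal property maps A into its subalgebra of finitely generated
   elements; followed by the inclusion, this map is the identity by uniqueness. *)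
case=> x_rel x_univ a; have [x_l x_lt x_gt] := x_rel.
pose y i : fin_gen_subalg x := FinGenSubalg (fin_gen_gen x i).
have y_rel : clg_rel l xi y.
  split=> [i | i j ij | i j ij]; apply: val_inj;
    rewrite ?linearZ ?rmorphM ?rmorphXn ?rmorph1 /=; [exact: x_l | exact: x_lt | exact: x_gt].
have [[g [g_hom gx]] _] := x_univ _ y y_rel.
have val_hom : is_alg_hom (val : fin_gen_subalg x -> A).
  by split=> [u w | k u | u w |]; rewrite ?raddfD ?linearZ ?rmorphM ?rmorph1.
have id_hom : is_alg_hom (@id A) by [].
have := (x_univ _ x x_rel).2 _ _ (is_alg_hom_comp val_hom g_hom) id_hom.
move=> /(_ (fun i => congr1 val (gx i)) (fun i => erefl) a) /= <-.
by apply/fin_genP/valP.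
Qed.

Lemma infinite_uniq_extend (T : eqType) (s : seq T) n :
  infinite_type T -> (size s <= n)%N ->
  exists J : seq T, [/\ uniq J, size J = n & {subset s <= J}].
Proof.
move=> T_inf s_n.
have extend k :
    exists J : seq T, [/\ uniq J, size J = (size (undup s) + k)%N & {subset s <= J}].
  elim: k => [|k [J [J_uniq J_size sJ]]].
    by exists (undup s); rewrite undup_uniq addn0; split=> // t; rewrite mem_undup.
  have [t tJ] := T_inf J; exists (t :: J); rewrite /= tJ J_uniq J_size addnS.
  by split=> // t' /sJ; rewrite inE orbC => ->.
have [J [J_uniq J_size sJ]] := extend (n - size (undup s))%N.
by exists J; rewrite J_size subnKC // (leq_trans (size_undup s)).
Qed.

Lemma steinitz_lcm_pow (S : nat -> Prop) l : (0 < l)%N ->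
    (forall n, S n -> exists m, (n %| l ^ m)%N) -> (forall m, S (l ^ m)%N) ->
  is_steinitz_lcm S (steinitz_inf l).
Proof.
move=> l_gt0 S_dvd S_pow; split=> [n Sn p p_prime | t t_ub p p_prime].
  rewrite /steinitz_of_nat /steinitz_inf; case: ifP => //= p_l.
  case: (posnP (logn p n)) => [-> // | ]; rewrite logn_gt0 mem_primes => /and3P[_ _ p_n].
  have [m n_lm] := S_dvd n Sn.
  by have := dvdn_trans p_n n_lm; rewrite Euclid_dvdX // p_l.
rewrite /steinitz_inf; case: ifP => p_l; last by case: (t p).
case tp: (t p) => [r|] //=; have := t_ub _ (S_pow r.+1) p p_prime.
rewrite /steinitz_of_nat tp /= lognX; apply/negP; rewrite -ltnNge.
by rewrite (leq_trans _ (leq_pmulr r.+1 _)) // logn_gt0 mem_primes p_prime l_gt0.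
Qed.

Section ClgAlgebra.
Variables (F : closedFieldType) (l : nat) (xi : F) (d : Order.disp_t) (I : orderType d).
Variables (A : algType F) (x : I -> A).
Hypotheses (xi_prim : l.-primitive_root xi) (I_inf : infinite_type I) (x_clg : is_Clg l xi x).

Lemma clg_qcomm i j : (i < j)%O -> qcomm xi (x i) (x j).
Proof.
have [[x_l x_lt _] _] := x_clg; move=> /x_lt ij; rewrite /qcomm -[x j * x i]mul1r -(x_l i).
by rewrite -(prednK (prim_order_gt0 xi_prim)) exprS -!mulrA (mulrA _ (x j)) ij scalerAr.
Qed.

Lemma clg_embedding (J : seq I) m : uniq J -> size J = (2 * m)%N ->
  exists k, (l ^ m)%N = k.+1 /\ exists f : 'M[F]_k.+1 -> A,
    matrix_embedding f /\ forall i, i \in J -> exists M, f M = x i.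
Proof.
move=> J_uniq J_size; have [i0 _] := I_inf [::].
set J' := sort <=%O J; have J'_size : size J' = (2 * m)%N by rewrite size_sort.
have J'_sorted : sorted <%O J' by rewrite sort_lt_sorted.
pose z k := x (nth i0 J' k).
have zq : qseq l xi z (2 * m).
  split=> [k _ | p q pq]; first by have [[x_l _ _] _] := x_clg; apply: x_l.
  by apply/clg_qcomm/(sorted_ltn_nth lt_trans); rewrite ?inE ?J'_size //; lia.
have [T [E [cardT E_units zE _]]] := qseq_mxunits xi_prim zq.
have [k [cardTk [f [f_emb fE]]]] := mxunits_embedding E_units.
exists k; split; first by rewrite -cardT cardTk.
exists f; split=> // i iJ; have iJ' : i \in J' by rewrite mem_sort.
rewrite -(nth_index i0 iJ'); apply: gen_alg_hom_image f_emb.1 _ (zE _ _).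
  by move=> _ [a [b ->]].
by rewrite -J'_size index_mem.
Qed.

Lemma clg_embedding_seq (s : seq A) : exists m k, (l ^ m)%N = k.+1 /\
  exists f : 'M[F]_k.+1 -> A, matrix_embedding f /\ forall a, a \in s -> exists M, f M = a.
Proof.
have [s0 s0_gen] : exists s0 : seq I, forall a, a \in s -> gen (fam_range x (mem s0)) a.
  elim: s => [|a s [s0 s0_gen]]; first by exists [::].
  have [s1 s1_gen] := clg_fin_gen x_clg a.
  exists (s1 ++ s0) => b; rewrite inE; case/predU1P => [-> | /s0_gen b_s0].
    by apply: gen_fam_range_sub s1_gen => i /=; rewrite mem_cat => ->.
  by apply: gen_fam_range_sub b_s0 => i /=; rewrite mem_cat orbC => ->.
have [J [J_uniq J_size s0J]] := infinite_uniq_extend I_inf (leq_pmull (size s0) (isT : (0 < 2)%N)).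
have [k [lk [f [f_emb fx]]]] := clg_embedding J_uniq J_size.
exists (size s0), k; split=> //; exists f; split=> // a /s0_gen.
by apply: gen_alg_hom_image f_emb.1 _ => _ [i /s0J /fx fxi ->].
Qed.

Lemma clg_locally_matrix : locally_matrix A.
Proof. by move=> s; have [_ [k [_ f_emb]]] := clg_embedding_seq s; exists k. Qed.

Lemma D_set_clg_pow m : D_set A (l ^ m).
Proof.
have [J [J_uniq J_size _]] := infinite_uniq_extend (s := [::]) (n := (2 * m)%N) I_inf (leq0n _).
by have [k [lk [f [f_emb _]]]] := clg_embedding J_uniq J_size; exists k; split=> //; exists f.
Qed.

Lemma D_set_clg_dvd n : D_set A n -> exists m, (n %| l ^ m)%N.
Proof.
move=> [k [-> [g [g_hom g_inj]]]].
pose s := [seq g (delta_mx p.1 p.2) | p <- enum {: 'I_k.+1 * 'I_k.+1}].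
have [m [N [lN [f [[f_hom f_inj] f_s]]]]] := clg_embedding_seq s.
have /fin_all_exists[Q fQ] p : exists M, f M = g (delta_mx p.1 p.2).
  by apply: f_s; apply: map_f; rewrite mem_enum.
have [gM g1] := (mxunits_inj_alg_hom _ g_hom g_inj).2 (delta_mxunits F k).
have Q_units : mxunits (fun a b => Q (a, b)).
  apply/(mxunits_inj_alg_hom _ f_hom f_inj); split=> [a b c e | ].
    by rewrite !fQ gM.
  by under eq_bigr do rewrite fQ.
by exists m; rewrite lN -[k.+1]card_ord; apply: mxunits_card_dvd Q_units.
Qed.

End ClgAlgebra.

Theorem theorem7 (F : closedFieldType) (l : nat) (xi : F)
  (d : Order.disp_t) (I : orderType d) (A : algType F) (x : I -> A) :
  (1 < l)%N ->
  (forall p : nat, p \in [pchar F] -> coprime p l) ->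
  l.-primitive_root xi ->
  infinite_type I ->
  is_Clg l xi x ->
  locally_matrix A /\ is_steinitz_lcm (D_set A) (steinitz_inf l).
Proof.
move=> l_gt1 _ xi_prim I_inf x_clg; split; first exact: clg_locally_matrix x_clg.
apply: steinitz_lcm_pow (ltnW l_gt1) _ (D_set_clg_pow xi_prim I_inf x_clg).
exact: D_set_clg_dvd x_clg.
Qed.
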